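(* Let $d>0$, let $J$ satisfy (J) and (J2), let $f$ satisfy (f3), let $c_*$ be the minimal traveling wave speed, and fix $c\in(0,c_* )$ and a constant $M$ as in the context. For each $\sigma\in(0,1)$ let $\phi_\sigma=\lim_{n\to\infty}A_\sigma^n[\phi_*^\sigma]$ be the solution obtained by the iteration described in the context. Then there exists $\delta_0\in(0,1]$ such that $$\phi_\sigma(x)\ge\phi_\sigma(y)\ \text{ whenever } x\le y\le0,\ \sigma\in(0,\delta_0),$$ and $$\phi_{\sigma_1}(x)\le\phi_{\sigma_2}(x)\ \text{ whenever } 0<\sigma_1\le\sigma_2<1,\ x\le0.$$
   Context: Condition (J): $J\in C(\mathbb{R})\cap L^\infty(\mathbb{R})$, $J\ge 0$, $J(0)>0$, $\int_{\mathbb{R}}J=1$, $J$ even. Condition (J2): there exists $\lambda>0$ with $\int_{\mathbb{R}}J(x)e^{\lambda x}dx<\infty$. Condition (f3): $f\in C^1([0,\infty))$, $f(0)=f(1)=0$, $f>0$ in $(0,1)$, $f'(0)>0>f'(1)$, $f(u)/u$ nonincreasing in $u>0$. Known fact: under (J), (J2), (f3) there is $c_*>0$ such that $d\int_{\mathbb{R}}J(x-y)\phi(y)dy-d\phi(x)+c\phi'(x)+f(\phi(x))=0$ on $\mathbb{R}$, $\phi(-\infty)=1$, $\phi(+\infty)=0$, has a nonincreasing bounded solution iff $c\ge c_*$; such solutions are $C^1$. Construction (for fixed $c\in(0,c_* )$): $M>0$ is chosen so that $\tilde f(u):=(cM-d)u+f(u)$ is increasing on $[0,1]$; $a(x)=\int_{-\infty}^xJ(y)dy$.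 For $\sigma\in(0,1)$, $A_\sigma$ acts on $\{\phi\in C(\mathbb{R}):0\le\phi\le1\}$ by $A_\sigma[\phi](x)=\sigma$ for $x\ge0$ and, for $x<0$, $A_\sigma[\phi](x)=e^{Mx}\sigma+\frac{e^{Mx}}{c}\int_x^0e^{-M\xi}\big[d\int_{-\infty}^0J(\xi-y)\phi(y)dy+d\sigma a(\xi)+\tilde f(\phi(\xi))\big]d\xi$. Fix one nonincreasing traveling wave $\psi$ with speed $c_*$; for each $\sigma$ let $\phi_{*\sigma}$ be the translate of $\psi$ with $\phi_{*\sigma}(0)=\sigma$ and $\phi_*^\sigma=\max\{\phi_{*\sigma},\sigma\}$. The limit $\phi_\sigma$ exists and solves $d\int_{\mathbb{R}}J(x-y)\phi(y)dy-d\phi+c\phi'+f(\phi)=0$ for $x<0$, $\phi(-\infty)=1$, $\phi=\sigma$ on $[0,\infty)$. *)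

From HB Require Import structures.
From mathcomp Require Import all_boot all_order all_algebra.
From mathcomp Require Import all_classical all_reals all_analysis.
Set Implicit Arguments. Unset Strict Implicit. Unset Printing Implicit Defensive.
Import Order.TTheory GRing.Theory Num.Theory.
Import numFieldNormedType.Exports.
Local Open Scope classical_set_scope.
Local Open Scope ring_scope.

Section Defs.
Variable R : realType.
Local Notation leb := (@lebesgue_measure R).

Definition condJ (J : R -> R) : Prop :=
  continuous J /\
  (exists B : R, forall x, `|J x| <= B) /\
  (forall x, 0 <= J x) /\ 0 < J 0 /\
  (\int[leb]_(x in setT) (J x)%:E = 1)%E /\
  (forall x, J (- x) = J x).

Definition condJ2 (J : R -> R) : Prop :=
  exists lam : R, 0 < lam /\
    (\int[leb]_(x in setT) (J x * expR (lam * x))%:E < +oo)%E.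

Definition condf3 (f : R -> R) : Prop :=
  (forall x, 0 <= x -> derivable f x 1) /\
  {within `[0, +oo[, continuous (derive1 f)} /\
  f 0 = 0 /\ f 1 = 0 /\
  (forall u, 0 < u < 1 -> 0 < f u) /\
  0 < (derive1 f) 0 /\ (derive1 f) 1 < 0 /\
  (forall u v, 0 < u -> u <= v -> f v / v <= f u / u).

Definition convJ (J phi : R -> R) (x : R) : R :=
  \int[leb]_(y in setT) (J (x - y) * phi y).

Definition is_tw (d : R) (J f : R -> R) (c : R) (phi : R -> R) : Prop :=
  (forall x, derivable phi x 1) /\
  (forall x, d * convJ J phi x - d * phi x + c * derive1 phi x + f (phi x) = 0) /\
  (phi @ -oo --> (1:R)) /\
  (phi @ +oo --> (0:R)).

Definition is_nonincr_bdd_tw d J f c phi : Prop :=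
  is_tw d J f c phi /\
  (forall x y : R, x <= y -> phi y <= phi x) /\
  (exists B : R, forall x, `|phi x| <= B).

Definition is_min_speed d J f (cstar : R) : Prop :=
  0 < cstar /\
  forall c, (exists phi, is_nonincr_bdd_tw d J f c phi) <-> cstar <= c.

Definition aJ (J : R -> R) (x : R) : R :=
  \int[leb]_(y in `]-oo, x]) J y.

Definition ftilde (c M d : R) (f : R -> R) (u : R) : R :=
  (c * M - d) * u + f u.

Definition Aop (d c M : R) (J f : R -> R) (sigma : R) (phi : R -> R)
  (x : R) : R :=
  if 0 <= x then sigma
  else expR (M * x) * sigma +
       expR (M * x) / c *
       \int[leb]_(xi in `[x, 0]) (expR (- (M * xi)) *
          (d * (\int[leb]_(y in `]-oo, 0]) (J (xi - y) * phi y))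
           + d * sigma * aJ J xi + ftilde c M d f (phi xi))).

(* phi_*^sigma = max { psi(. + s), sigma }, where psi(s) = sigma *)
Definition phistar_up (psi : R -> R) (s sigma : R) (x : R) : R :=
  Num.max (psi (x + s)) sigma.

End Defs.

From HB Require Import structures.
From mathcomp Require Import all_boot all_order all_algebra.
From mathcomp Require Import all_classical all_reals all_analysis.
From mathcomp Require Import measurable_realfun ring lra.
Set Implicit Arguments. Unset Strict Implicit. Unset Printing Implicit Defensive.
Import Order.TTheory GRing.Theory Num.Theory.
Import numFieldNormedType.Exports.
Local Open Scope classical_set_scope.
Local Open Scope ring_scope.

(* A_sigma is Duhamel's formula for c u' = c M u - G on x < 0 with u(0) = sigma,
   for the source G = d J*phi + ftilde(phi) in which phi is a profile already
   equal to sigma on [0, +oo[: the two nonlocal terms of A_sigma then add up to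
   the full convolution J*phi.  Call such phi admissible when it is moreover
   nonincreasing with values in [sigma, 1].  For admissible phi the source G is
   nonincreasing with values in [c M sigma, c M]; Duhamel's formula maps such
   sources to admissible profiles and is monotone in (sigma, G), while G is
   monotone in phi.  The initial profiles phi_*^sigma are admissible and
   nondecreasing in sigma, so every iterate A_sigma^n[phi_*^sigma] is
   nonincreasing in x and nondecreasing in sigma, and both properties pass to
   the pointwise limit phi_sigma.  Hence delta0 = 1 works. *)

Lemma integrable_mul_le1 d (T : measurableType d) (R : realType)
    (mu : {measure set T -> \bar R}) (K h : T -> R) :
  mu.-integrable setT (EFin \o K) -> (forall t, 0 <= K t) ->
  measurable_fun setT h -> (forall t, `|h t| <= 1) ->
  mu.-integrable setT (EFin \o (fun t => K t * h t)).
Proof.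
move=> iK K0 mh h1; have /integrableP[/measurable_EFinP mK _] := iK.
apply: le_integrable iK => //; first exact/measurable_EFinP/measurable_funM.
by move=> t _; rewrite /= lee_fin normrM (ger0_norm (K0 t)) ler_piMr.
Qed.

Section reflection.
Context {R : realType} (a : R).
Local Notation leb := (@lebesgue_measure R).

Lemma measurable_fun_subr : measurable_fun setT (fun t : R => a - t).
Proof. exact: measurable_funB. Qed.

Lemma lebesgue_measure_reflect (A : set R) : measurable A ->
  leb ((fun t => a - t) @^-1` A) = leb A.
Proof.
move=> mA.
(* The pushforward is a measure only along a measurable map, so [mu] is still a
   function of that proof. *)
pose mu : {measure set (measurableTypeR R) -> \bar R} :=
  @pushforward _ _ (measurableTypeR R) (measurableTypeR R) R leb (fun t => a - t).
rewrite [RHS](@lebesgue_measure_unique R (mu measurable_fun_subr)) //.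
move=> _ [[u v] _ <-] /=.
rewrite /pushforward (_ : _ @^-1` _ = `[a - v, a - u[%classic); last first.
  by apply/seteqP; split => t; rewrite /= !in_itv /= => /andP[? ?];
    apply/andP; split; lra.
rewrite !lebesgue_measure_itv /= !lte_fin ltrD2l ltrN2.
by case: ltP => // _; congr (_%:E); lra.
Qed.

Lemma ge0_integral_reflect (D : set R) (F : R -> \bar R) :
  measurable D -> measurable_fun D F -> (forall y, D y -> (0 <= F y)%E) ->
  (\int[leb]_(y in D) F y =
   \int[leb]_(t in (fun t => a - t)%R @^-1` D) F (a - t)%R)%E.
Proof.
move=> mD mF F0.
pose mu : {measure set (measurableTypeR R) -> \bar R} :=
  @pushforward _ _ (measurableTypeR R) (measurableTypeR R) R leb (fun t => a - t).
rewrite (eq_measure_integral (mu measurable_fun_subr)); last first.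
  by move=> B mB _; symmetry; exact: lebesgue_measure_reflect.
rewrite ge0_integral_pushforward //; first exact: measurable_fun_subr.
by move=> y /[!inE]; exact: F0.
Qed.

Lemma Rintegral_reflect (D : set R) (f : R -> R) :
  measurable D -> measurable_fun D f -> (forall y, D y -> 0 <= f y) ->
  \int[leb]_(y in D) f y = \int[leb]_(t in (fun t => a - t) @^-1` D) f (a - t).
Proof.
move=> mD mf f0; congr fine; apply: ge0_integral_reflect => //.
exact/measurable_EFinP.
Qed.

End reflection.

Section exponential_weight.
Context {R : realType} (M : R).
Local Notation leb := (@lebesgue_measure R).

Global Instance is_derive_expNM (x : R) :
  is_derive x 1 (fun y => expR (- (M * y))) (- M * expR (- (M * x))).
Proof.
have dl : is_derive x 1 ( *%R (- M)) (- M).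
  have := @is_deriveZ _ _ _ id (- M) x 1 1 (is_derive_id _ _).
  by rewrite /GRing.scale /= mulr1.
have -> : (fun y => expR (- (M * y))) = expR \o ( *%R (- M)).
  by apply/funext => y; rewrite /= mulNr.
by apply: is_derive_eq; rewrite mulNr mulrC.
Qed.

Lemma continuous_expNM : continuous (fun x => expR (- (M * x))).
Proof.
move=> x; apply/differentiable_continuous/derivable1_diffP.
exact: ex_derive.
Qed.

Lemma Rintegral_expNM_mulr (k a b : R) : M != 0 -> a <= b ->
  \int[leb]_(x in `[a, b]) (expR (- (M * x)) * k)
  = (expR (- (M * a)) - expR (- (M * b))) / M * k.
Proof.
move=> M0; rewrite le_eqVlt => /predU1P[<-|ab].
  by rewrite set_itv1 Rintegral_set1 subrr !mul0r.
pose F x := - (k / M) * expR (- (M * x)).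
have dF (x : R) : is_derive x 1 F (expR (- (M * x)) * k).
  have := @is_deriveZ _ _ _ _ (- (k / M)) x 1 _ (is_derive_expNM x).
  by move=> h; apply: is_derive_eq h _; rewrite /GRing.scale /=; field.
have cF : continuous F.
  by move=> x; apply/differentiable_continuous/derivable1_diffP; exact: ex_derive.
rewrite /Rintegral (@continuous_FTC2 _ _ F _ _ ab) /=.
- by rewrite /F; field.
- by apply/continuous_subspaceT => x; exact: cvgMr_tmp (@continuous_expNM x).
- split; first by move=> x _; exact: ex_derive.
  + exact: cvg_at_right_filter (cF a).
  + exact: cvg_at_left_filter (cF b).
- by move=> x _; rewrite derive1E derive_val.
Qed.

End exponential_weight.

Section duhamel.
Context {R : realType} (c M : R).
Hypotheses (c0 : 0 < c) (M0 : 0 < M).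
Local Notation leb := (@lebesgue_measure R).
Local Notation e := (fun x : R => expR (- (M * x))).

Definition duhamel (s : R) (G : R -> R) (x : R) : R :=
  if 0 <= x then s
  else expR (M * x) * s
       + expR (M * x) / c * \int[leb]_(xi in `[x, 0]) (expR (- (M * xi)) * G xi).

Record duhamel_source (s : R) (G : R -> R) : Prop := DuhamelSource {
  source_noninc : nonincreasing_fun G;
  source_bounds : forall x, c * M * s <= G x <= c * M }.

Lemma duhamel_source_cst (s k : R) : c * M * s <= k <= c * M ->
  duhamel_source s (fun=> k).
Proof. by move=> sk; split. Qed.

Lemma source_integrable (s a b : R) (G : R -> R) : 0 <= s ->
  duhamel_source s G -> leb.-integrable `[a, b] (EFin \o (fun x => e x * G x)).
Proof.
move=> s0 [GN GB].
have cM0 : 0 <= c * M by rewrite mulr_ge0 ?ltW.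
have G0 x : 0 <= G x by apply: le_trans (andP (GB x)).1; rewrite mulr_ge0.
have eB : leb.-integrable `[a, b] (EFin \o (fun x => e x * (c * M))).
  apply: continuous_compact_integrable; first exact: segment_compact.
  by apply/continuous_subspaceT => x; exact: cvgMr_tmp (@continuous_expNM _ M x).
apply: le_integrable eB => //.
- apply/measurable_EFinP/measurable_funM; last exact: nonincreasing_measurable.
  apply: measurable_funTS.
  exact: continuous_measurable_fun (@continuous_expNM _ M).
- move=> x _; rewrite /= lee_fin (ger0_norm (mulr_ge0 (expR_ge0 _) (G0 x))).
  rewrite (ger0_norm (mulr_ge0 (expR_ge0 _) cM0)).
  by rewrite ler_wpM2l ?expR_ge0 // (andP (GB x)).2.
Qed.

Lemma duhamel_le (s1 s2 : R) (G1 G2 : R -> R) (x : R) : 0 <= s1 -> s1 <= s2 ->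
  duhamel_source s1 G1 -> duhamel_source s2 G2 ->
  (forall xi, x <= xi <= 0 -> G1 xi <= G2 xi) ->
  duhamel s1 G1 x <= duhamel s2 G2 x.
Proof.
move=> s10 s12 src1 src2 G12; rewrite /duhamel; case: ifP => // _.
apply: lerD; first by rewrite ler_wpM2l ?expR_ge0.
apply: ler_wpM2l; first by rewrite divr_ge0 ?expR_ge0 ?ltW.
apply: le_Rintegral => //.
- exact: source_integrable src1.
- exact: source_integrable (le_trans s10 s12) src2.
- move=> xi; rewrite /= in_itv /= => xi_x0.
  by rewrite ler_wpM2l ?expR_ge0 ?G12.
Qed.

Lemma duhamel_cst (s k x : R) : x <= 0 ->
  duhamel s (fun=> k) x = expR (M * x) * s + k / (c * M) * (1 - expR (M * x)).
Proof.
rewrite /duhamel le_eqVlt => /predU1P[->|x0].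
  by rewrite lexx mulr0 expR0 subrr; ring.
rewrite leNgt x0 /= Rintegral_expNM_mulr ?gt_eqF ?(ltW x0) //.
rewrite mulr0 oppr0 expR0.
have -> : 1 - expR (M * x) = expR (M * x) * (expR (- (M * x)) - 1).
  by rewrite mulrBr expRxMexpNx_1 mulr1.
by field; rewrite !gt_eqF.
Qed.

Lemma duhamel_bounds (s : R) (G : R -> R) (x : R) : 0 <= s <= 1 ->
  duhamel_source s G -> s <= duhamel s G x <= 1.
Proof.
move=> /andP[s0 s1] src.
have [x0|x0] := leP 0 x; first by rewrite /duhamel x0 lexx s1.
have cM0 : 0 < c * M by rewrite mulr_gt0.
have cMs : c * M * s <= c * M by apply: ler_piMr => //; exact: ltW.
apply/andP; split.
- apply: (@le_trans _ _ (duhamel s (fun=> c * M * s) x)).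
    rewrite duhamel_cst ?(ltW x0) //.
    have -> : c * M * s / (c * M) = s by field; rewrite !gt_eqF.
    by rewrite mulrBr mulr1 [expR _ * s]mulrC addrC subrK.
  apply: duhamel_le => //; first by apply: duhamel_source_cst; rewrite cMs lexx.
  by move=> xi _; case/andP: (source_bounds src xi).
- apply: (@le_trans _ _ (duhamel s (fun=> c * M) x)).
    apply: duhamel_le => //; first by apply: duhamel_source_cst; rewrite cMs lexx.
    by move=> xi _; case/andP: (source_bounds src xi).
  rewrite duhamel_cst ?(ltW x0) // divff ?gt_eqF // mul1r.
  by rewrite addrCA gerDl subr_le0; apply: ler_piMr => //; exact: expR_ge0.
Qed.

Lemma duhamel_shift (s : R) (G : R -> R) (x y : R) : 0 <= s ->
  duhamel_source s G -> x <= y -> y < 0 ->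
  duhamel s G x = expR (M * (x - y)) * duhamel s G y
    + expR (M * x) / c * \int[leb]_(xi in `[x, y]) (e xi * G xi).
Proof.
move=> s0 src xy y0; have x0 := le_lt_trans xy y0.
rewrite /duhamel !leNgt x0 y0 /=.
have xy0 : (BLeft x <= BLeft y)%O by rewrite bnd_simp.
have y00 : (BLeft y <= BRight 0)%O by rewrite bnd_simp ltW.
rewrite (itv_bndbnd_setU xy0 y00) /= Rintegral_setU //; last 2 first.
- by rewrite -itv_bndbnd_setU //; exact: source_integrable s0 src.
- apply/disj_setPS => z [] /=; rewrite !in_itv /= => /andP[_ zy] /andP[yz _].
  by move: (lt_le_trans zy yz); rewrite ltxx.
rewrite Rintegral_itv_bndo_bndc; last first.
  apply: integrableS (source_integrable x y s0 src) => //.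
  by apply: subset_itvl; rewrite bnd_simp.
have -> : expR (M * x) = expR (M * (x - y)) * expR (M * y).
  by rewrite -expRD mulrBr subrK.
ring.
Qed.

Lemma duhamel_le_source (s : R) (G : R -> R) (y : R) : 0 <= s ->
  duhamel_source s G -> c * M * duhamel s G y <= G y.
Proof.
move=> s0 src; have /andP[Gy_ge _] := source_bounds src y.
have [y0|y0] := leP 0 y; first by rewrite /duhamel y0.
have cM0 : 0 < c * M by rewrite mulr_gt0.
apply: (@le_trans _ _ (c * M * duhamel s (fun=> G y) y)).
  rewrite ler_pM2l //; apply: duhamel_le => //.
    exact: duhamel_source_cst (source_bounds src y).
  by move=> xi /andP[yxi _]; exact: (source_noninc src yxi).
rewrite duhamel_cst ?(ltW y0) //.
have -> : c * M * (expR (M * y) * s + G y / (c * M) * (1 - expR (M * y)))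
  = G y - expR (M * y) * (G y - c * M * s) by field; rewrite !gt_eqF.
by rewrite gerDl oppr_le0 mulr_ge0 ?expR_ge0 ?subr_ge0.
Qed.

(* By duhamel_shift, u x = k u y + (e^{M x} / c) \int_x^y e^{-M xi} G xi with
   k = e^{M (x - y)} <= 1.  As G >= G y on [x, y], the second term is at least
   (1 - k) G y / (c M), and u y <= G y / (c M) by duhamel_le_source. *)
Lemma duhamel_noninc (s : R) (G : R -> R) : 0 <= s <= 1 ->
  duhamel_source s G -> nonincreasing_fun (duhamel s G).
Proof.
move=> s01 src x y xy; have /andP[s0 _] := s01.
have [y0|y0] := leP 0 y.
  by rewrite {1}/duhamel y0; case/andP: (duhamel_bounds x s01 src).
rewrite (duhamel_shift s0 src xy y0).
set u := duhamel s G y; set k := expR (M * (x - y)).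
have cM0 : 0 < c * M by rewrite mulr_gt0.
have k1 : k <= 1 by rewrite -expR0 ler_expR pmulr_rle0 // subr_le0.
have src_y := duhamel_source_cst (source_bounds src y).
have I_ge : (expR (- (M * x)) - expR (- (M * y))) / M * G y
    <= \int[leb]_(xi in `[x, y]) (e xi * G xi).
  rewrite -Rintegral_expNM_mulr ?gt_eqF //.
  apply: le_Rintegral => //.
  - exact: source_integrable s0 src_y.
  - exact: source_integrable s0 src.
  - move=> xi; rewrite /= in_itv /= => /andP[_ xiy].
    by rewrite ler_wpM2l ?expR_ge0 //; exact: (source_noninc src xiy).
have u_le : c * M * u <= G y := duhamel_le_source y s0 src.
apply: (@le_trans _ _ (k * u + G y / (c * M) * (1 - k))).
  rewrite -lerBlDl -{1}[u]mul1r -mulrBl mulrC ler_wpM2r ?subr_ge0 //.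
  by rewrite ler_pdivlMr // mulrC.
rewrite lerD2l; apply: le_trans (ler_wpM2l _ I_ge); last first.
  by rewrite divr_ge0 ?expR_ge0 ?ltW.
rewrite le_eqVlt; apply/orP; left; apply/eqP.
have -> : 1 - k = expR (M * x) * (expR (- (M * x)) - expR (- (M * y))).
  by rewrite mulrBr expRxMexpNx_1 -expRD /k mulrBr.
by field; rewrite !gt_eqF.
Qed.

End duhamel.

Record admissible {R : realType} (s : R) (p : R -> R) : Prop := Admissible {
  admissible_noninc : nonincreasing_fun p;
  admissible_bounds : forall x, s <= p x <= 1;
  admissible_eq : forall x, 0 <= x -> p x = s }.

Section admissible_profiles.
Context {R : realType} (s : R) (p : R -> R).
Hypotheses (s0 : 0 <= s) (adm : admissible s p).

Lemma admissible_measurable : measurable_fun setT p.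
Proof. exact: nonincreasing_measurable (admissible_noninc adm). Qed.

Lemma admissible_ge0 x : 0 <= p x.
Proof. by apply: le_trans s0 _; case/andP: (admissible_bounds adm x). Qed.

Lemma admissible_le1 x : p x <= 1.
Proof. by case/andP: (admissible_bounds adm x). Qed.

Lemma admissible_norm_le1 x : `|p x| <= 1.
Proof. by rewrite ger0_norm ?admissible_ge0 ?admissible_le1. Qed.

Lemma admissible_level_le1 : s <= 1.
Proof. by rewrite -(admissible_eq adm (lexx 0)) admissible_le1. Qed.

End admissible_profiles.

Section convolution.
Context {R : realType} (J : R -> R).
Local Notation leb := (@lebesgue_measure R).
Hypotheses (mJ : measurable_fun setT J) (J0 : forall x, 0 <= J x)
  (J1 : (\int[leb]_(x in setT) (J x)%:E = 1)%E).

Lemma measurable_J_subr (x : R) : measurable_fun setT (fun y : R => J (x - y)).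
Proof. exact: measurableT_comp mJ (measurable_fun_subr x). Qed.

Lemma integral_J_subr (x : R) : (\int[leb]_(y in setT) (J (x - y))%:E = 1)%E.
Proof.
rewrite (ge0_integral_reflect x) //; last first.
- by move=> y _; rewrite lee_fin.
- by apply/measurable_EFinP; exact: measurable_J_subr.
by rewrite preimage_setT; under eq_integral do rewrite subKr.
Qed.

Lemma integrable_J_subr (x : R) :
  leb.-integrable setT (EFin \o (fun y => J (x - y))).
Proof.
apply/integrableP; split.
  by apply/measurable_EFinP; exact: measurable_J_subr.
under eq_integral do rewrite /= ger0_norm ?J0 //.
by rewrite integral_J_subr ltry.
Qed.

Lemma integrable_J : leb.-integrable setT (EFin \o J).
Proof.
apply/integrableP; split; first exact/measurable_EFinP.
by under eq_integral do rewrite /= ger0_norm ?J0 //; rewrite J1 ltry.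
Qed.

Lemma convJE (q : R -> R) (x : R) :
  measurable_fun setT q -> (forall y, 0 <= q y) ->
  convJ J q x = \int[leb]_(t in setT) (J t * q (x - t)).
Proof.
move=> mq q0; rewrite /convJ (Rintegral_reflect x) //.
- by rewrite preimage_setT; apply: eq_Rintegral => t _; rewrite subKr.
- by apply: measurable_funM => //; exact: measurable_J_subr.
- by move=> y _; rewrite mulr_ge0.
Qed.

Lemma convJ_cst (k x : R) : convJ J (fun=> k) x = k.
Proof.
rewrite /convJ RintegralZr //; last exact: integrable_J_subr.
by rewrite /Rintegral integral_J_subr mul1r.
Qed.

Lemma le_convJ (q1 q2 : R -> R) (x : R) :
  measurable_fun setT q1 -> measurable_fun setT q2 ->
  (forall y, `|q1 y| <= 1) -> (forall y, `|q2 y| <= 1) ->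
  (forall y, q1 y <= q2 y) -> convJ J q1 x <= convJ J q2 x.
Proof.
move=> mq1 mq2 q11 q21 q12; apply: le_Rintegral => //.
- exact: integrable_mul_le1 (integrable_J_subr x) _ mq1 q11.
- exact: integrable_mul_le1 (integrable_J_subr x) _ mq2 q21.
- by move=> y _; rewrite ler_wpM2l.
Qed.

Section admissible_convolution.
Variables (s : R) (p : R -> R).
Hypotheses (s0 : 0 <= s) (adm : admissible s p).

Lemma convJ_bounds (x : R) : s <= convJ J p x <= 1.
Proof.
have mp := admissible_measurable adm; have p1 := admissible_norm_le1 s0 adm.
apply/andP; split.
- rewrite -[leLHS](convJ_cst s x); apply: le_convJ => //.
  + by move=> _; rewrite ger0_norm ?(admissible_level_le1 adm).
  + by move=> y; case/andP: (admissible_bounds adm y).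
- rewrite -[leRHS](convJ_cst 1 x); apply: le_convJ => //.
  + by move=> _; rewrite normr1.
  + exact: admissible_le1 adm.
Qed.

Lemma convJ_noninc : nonincreasing_fun (convJ J p).
Proof.
have mp := admissible_measurable adm; have p1 := admissible_norm_le1 s0 adm.
have mpx (x : R) : measurable_fun setT (fun t : R => p (x - t)).
  exact: measurableT_comp mp (measurable_fun_subr x).
move=> x y xy; rewrite !convJE //; try exact: admissible_ge0 s0 adm.
apply: le_Rintegral => //.
- exact: integrable_mul_le1 integrable_J J0 (mpx y) (fun t => p1 _).
- exact: integrable_mul_le1 integrable_J J0 (mpx x) (fun t => p1 _).
- move=> t _; rewrite ler_wpM2l //; apply: (admissible_noninc adm).
  by rewrite lerD2r.
Qed.

Lemma convJ_split (x : R) :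
  \int[leb]_(y in `]-oo, 0]) (J (x - y) * p y) + s * aJ J x = convJ J p x.
Proof.
have iF := integrable_mul_le1 (integrable_J_subr x) (fun y => J0 (x - y))
  (admissible_measurable adm) (admissible_norm_le1 s0 adm).
have N0y : (-oo <= BRight (0 : R) <= +oo)%O by [].
rewrite /convJ -set_itvNyy (itv_bndbnd_setU (andP N0y).1 (andP N0y).2).
rewrite Rintegral_setU //; last 2 first.
- by rewrite -itv_bndbnd_setU // set_itvNyy.
- apply/disj_setPS => y [] /=; rewrite !in_itv /= andbT => y0 y0'.
  by move: (le_lt_trans y0 y0'); rewrite ltxx.
congr (_ + _).
rewrite (@eq_Rintegral _ _ _ leb _ (fun y : R => J (x - y) * s)); last first.
  move=> y; rewrite inE /= in_itv /= andbT => y0.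
  by rewrite (admissible_eq adm (ltW y0)).
rewrite RintegralZr //; last exact: integrableS (integrable_J_subr x).
rewrite mulrC; congr (_ * _).
rewrite [RHS](Rintegral_reflect x) //; last first.
  by apply: measurable_funTS; exact: measurable_J_subr.
rewrite (_ : _ @^-1` _ = `]-oo, x[%classic); last first.
  by apply/seteqP; split => t; rewrite /= !in_itv /= andbT subr_gt0.
rewrite /aJ -Rintegral_itv_bndo_bndc; last exact: integrableS integrable_J.
by apply: eq_Rintegral => t _; rewrite subKr.
Qed.

End admissible_convolution.

End convolution.

Section wave_profile.
Context {R : realType} (psi : R -> R).
Hypothesis psiN : nonincreasing_fun psi.

Lemma nonincreasing_le_cvgNy (l : R) : psi @ -oo --> l -> forall x, psi x <= l.
Proof.
move=> psil x; apply: (cvgr_to_ge psil).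
by apply: filterS (nbhs_ninfty_le (num_real x)) => y; exact: psiN.
Qed.

Lemma phistar_up_admissible (sh s : R) : (forall x, psi x <= 1) ->
  psi sh = s -> admissible s (phistar_up psi sh s).
Proof.
move=> psi1 psi_sh; rewrite /phistar_up; split.
- move=> x y xy; rewrite ge_max !le_max lexx orbT andbT psiN //.
  by rewrite lerD2r.
- by move=> x; rewrite le_max lexx orbT /= ge_max psi1 -psi_sh psi1.
- move=> x x0; apply/max_idPr; rewrite -psi_sh; apply: psiN.
  by rewrite lerDr.
Qed.

Lemma phistar_up_le (shift : R -> R) (s1 s2 x : R) :
  psi (shift s1) = s1 -> psi (shift s2) = s2 -> s1 <= s2 ->
  phistar_up psi (shift s1) s1 x <= phistar_up psi (shift s2) s2 x.
Proof.
move=> psi1 psi2; rewrite le_eqVlt => /predU1P[->//|s12].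
have sh21 : shift s2 <= shift s1.
  by rewrite leNgt; apply/negP => /ltW/psiN; rewrite psi1 psi2 leNgt s12.
rewrite /phistar_up ge_max !le_max (ltW s12) orbT andbT psiN //.
by rewrite lerD2l.
Qed.

End wave_profile.

Section operator.
Context {R : realType} (d : R) (J f : R -> R) (c M : R).
Hypotheses (d0 : 0 < d) (c0 : 0 < c) (M0 : 0 < M).
Hypotheses (mJ : measurable_fun setT J) (J0 : forall x, 0 <= J x)
  (J1 : (\int[@lebesgue_measure R]_(x in setT) (J x)%:E = 1)%E).
Hypotheses (fpos : forall u, 0 < u < 1 -> 0 < f u) (f1 : f 1 = 0).
Hypothesis ftilde_incr : {in `[0, 1] &, {homo ftilde c M d f : u v / u < v}}.
Local Notation ft := (ftilde c M d f).

Lemma ftilde_le (u v : R) : 0 <= u -> u <= v -> v <= 1 -> ft u <= ft v.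
Proof.
move=> u0 uv v1; have [->//|uv'] := eqVneq u v.
apply/ltW/ftilde_incr; last by rewrite lt_neqAle uv' uv.
- by rewrite in_itv /= u0 (le_trans uv v1).
- by rewrite in_itv /= v1 (le_trans u0 uv).
Qed.

Definition nonlocal_source (p : R -> R) (xi : R) : R :=
  d * convJ J p xi + ft (p xi).

Lemma nonlocal_source_duhamel (s : R) (p : R -> R) : 0 < s < 1 ->
  admissible s p -> duhamel_source c M s (nonlocal_source p).
Proof.
move=> /andP[s0 s1] adm; have s0' := ltW s0.
split.
- move=> x y xy; apply: lerD.
    by rewrite ler_pM2l //; apply: (convJ_noninc mJ J0 J1 s0' adm).
  apply: ftilde_le; first exact: admissible_ge0 s0' adm _.
  + exact: (admissible_noninc adm xy).
  + exact: admissible_le1 adm _.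
- move=> x; have /andP[sL L1] := convJ_bounds mJ J0 J1 s0' adm x.
  have /andP[sp p1] := admissible_bounds adm x.
  have fts : ft s <= ft (p x) by apply: ftilde_le.
  have ft1 : ft (p x) <= ft 1 by apply: ftilde_le => //; exact: le_trans sp.
  have fs : 0 < f s by apply: fpos; rewrite s0 s1.
  have dL1 : d * s <= d * convJ J p x by rewrite ler_pM2l.
  have dL2 : d * convJ J p x <= d by rewrite -[leRHS]mulr1 ler_pM2l.
  rewrite /nonlocal_source /ftilde f1 addr0 mulr1 in ft1 *.
  rewrite /ftilde in fts; apply/andP; split; lra.
Qed.

Lemma nonlocal_source_le (s1 s2 : R) (p1 p2 : R -> R) : 0 <= s1 -> 0 <= s2 ->
  admissible s1 p1 -> admissible s2 p2 -> (forall x, p1 x <= p2 x) ->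
  forall x, nonlocal_source p1 x <= nonlocal_source p2 x.
Proof.
move=> s10 s20 adm1 adm2 p12 x; apply: lerD.
  rewrite ler_pM2l //; apply: le_convJ => //.
  - exact: admissible_measurable adm1.
  - exact: admissible_measurable adm2.
  - exact: admissible_norm_le1 s10 adm1.
  - exact: admissible_norm_le1 s20 adm2.
apply: ftilde_le => //; first exact: admissible_ge0 s10 adm1 _.
exact: admissible_le1 adm2 _.
Qed.

Lemma AopE (s : R) (p : R -> R) : 0 <= s -> admissible s p ->
  Aop d c M J f s p =1 duhamel c M s (nonlocal_source p).
Proof.
move=> s0 adm x; rewrite /Aop /duhamel; case: ifPn => // _.
congr (_ + _ * _); apply: eq_Rintegral => xi _.
rewrite /nonlocal_source -(convJ_split mJ J0 J1 s0 adm).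
by congr (_ * (_ + _)); rewrite mulrDr mulrA.
Qed.

Lemma Aop_admissible (s : R) (p : R -> R) : 0 < s < 1 -> admissible s p ->
  admissible s (Aop d c M J f s p).
Proof.
move=> s01 adm; have /andP[s0 s1] := s01.
have s01' : 0 <= s <= 1 by rewrite !ltW.
have src := nonlocal_source_duhamel s01 adm.
split => [x y xy|x|x x0]; rewrite ?(AopE (ltW s0) adm).
- exact: (duhamel_noninc c0 M0 s01' src xy).
- exact: (duhamel_bounds c0 M0 x s01' src).
- by rewrite /duhamel x0.
Qed.

Lemma Aop_le (s1 s2 : R) (p1 p2 : R -> R) : 0 < s1 -> s1 <= s2 -> s2 < 1 ->
  admissible s1 p1 -> admissible s2 p2 -> (forall x, p1 x <= p2 x) ->
  forall x, Aop d c M J f s1 p1 x <= Aop d c M J f s2 p2 x.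
Proof.
move=> s10 s12 s21 adm1 adm2 p12 x; have s20 := lt_le_trans s10 s12.
rewrite (AopE (ltW s10) adm1) (AopE (ltW s20) adm2).
apply: duhamel_le => //; first exact: ltW.
- by apply: nonlocal_source_duhamel adm1; rewrite s10 (le_lt_trans s12 s21).
- by apply: nonlocal_source_duhamel adm2; rewrite s20.
- by move=> xi _; exact: (nonlocal_source_le (ltW s10) (ltW s20) adm1 adm2 p12).
Qed.

Section iteration.
Variables (psi shift : R -> R).
Hypotheses (psiN : nonincreasing_fun psi) (psi_le1 : forall x, psi x <= 1)
  (psi_shift : forall s, 0 < s < 1 -> psi (shift s) = s).
Local Notation iterate s n :=
  (iter n (Aop d c M J f s) (phistar_up psi (shift s) s)).

Lemma iter_Aop_admissible (s : R) (n : nat) : 0 < s < 1 ->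
  admissible s (iterate s n).
Proof.
move=> s01; elim: n => [|n IH]; last exact: Aop_admissible.
exact: (phistar_up_admissible psiN psi_le1 (psi_shift s01)).
Qed.

Lemma iter_Aop_le (s1 s2 : R) (n : nat) (x : R) : 0 < s1 -> s1 <= s2 -> s2 < 1 ->
  iterate s1 n x <= iterate s2 n x.
Proof.
move=> s10 s12 s21.
have s1_01 : 0 < s1 < 1 by rewrite s10 (le_lt_trans s12 s21).
have s2_01 : 0 < s2 < 1 by rewrite (lt_le_trans s10 s12) s21.
elim: n x => [|n IH] x /=.
  exact: (phistar_up_le psiN x (psi_shift s1_01) (psi_shift s2_01) s12).
by apply: (Aop_le s10 s12 s21) => //; exact: iter_Aop_admissible.
Qed.

Variable phi : R -> R -> R.
Hypothesis phi_lim :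
  forall s, 0 < s < 1 -> forall x, iterate s n x @[n --> \oo] --> phi s x.

Lemma limit_noninc (s x y : R) : 0 < s < 1 -> x <= y -> phi s y <= phi s x.
Proof.
move=> s01 xy; apply: (ler_cvg_to (phi_lim s01 (x := y)) (phi_lim s01 (x := x))).
by apply: nearW => n; exact: (admissible_noninc (iter_Aop_admissible n s01) xy).
Qed.

Lemma limit_le (s1 s2 x : R) : 0 < s1 -> s1 <= s2 -> s2 < 1 ->
  phi s1 x <= phi s2 x.
Proof.
move=> s10 s12 s21.
have s1_01 : 0 < s1 < 1 by rewrite s10 (le_lt_trans s12 s21).
have s2_01 : 0 < s2 < 1 by rewrite (lt_le_trans s10 s12) s21.
apply: (ler_cvg_to (phi_lim s1_01 (x := x)) (phi_lim s2_01 (x := x))).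
by apply: nearW => n; exact: iter_Aop_le.
Qed.

End iteration.

End operator.

Theorem lemma2p2 (R : realType) (d : R) (J f : R -> R) (cstar c M : R)
  (psi : R -> R) (shift : R -> R) (phi : R -> R -> R) :
  0 < d ->
  condJ J -> condJ2 J -> condf3 f ->
  is_min_speed d J f cstar ->
  0 < c -> c < cstar ->
  0 < M ->
  {in `[0, 1] &, {homo ftilde c M d f : u v / u < v}} ->
  is_nonincr_bdd_tw d J f cstar psi ->
  (forall sigma, 0 < sigma < 1 -> psi (shift sigma) = sigma) ->
  (forall sigma, 0 < sigma < 1 -> forall x : R,
     (iter n (Aop d c M J f sigma) (phistar_up psi (shift sigma) sigma) x)
       @[n --> \oo] --> phi sigma x) ->
  exists delta0 : R, 0 < delta0 <= 1 /\
    (forall sigma x y, 0 < sigma < delta0 -> x <= y <= 0 ->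
       phi sigma y <= phi sigma x) /\
    (forall s1 s2 x, 0 < s1 -> s1 <= s2 -> s2 < 1 -> x <= 0 ->
       phi s1 x <= phi s2 x).
Proof.
move=> d0 [Jc [_ [J0 [_ [J1 _]]]]] _ [_ [_ [_ [f1 [fpos _]]]]] _ c0 _ M0
  ftilde_incr [[_ [_ [psi_Ny _]]] [psiN _]] psi_shift phi_lim.
have mJ := continuous_measurable_fun Jc.
have psi_le1 := nonincreasing_le_cvgNy psiN psi_Ny.
exists 1; split; first by rewrite ltr01 lexx.
split=> [s x y s01 /andP[xy _]|s1 s2 x s10 s12 s21 _].
- exact: (limit_noninc d0 c0 M0 mJ J0 J1 fpos f1 ftilde_incr psiN psi_le1
    psi_shift phi_lim s01 xy).
- exact: (limit_le d0 c0 M0 mJ J0 J1 fpos f1 ftilde_incr psiN psi_le1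
    psi_shift phi_lim x s10 s12 s21).
Qed.
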